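(* Let $n\ge3$, let $x_1,\dots,x_n$ be distinct points of $\mathbb{CP}^1$ and let $0<\alpha_i<1$ be real numbers satisfying $\sum_{i}(1-\alpha_i) < 2$ and, for every $1\le j\le n$, $1-\alpha_j < \sum_{i\ne j}(1-\alpha_i)$. Put $a_{i1} = \frac{1-\alpha_i}{2}$ and $a_{i2}=\frac{1+\alpha_i}{2}$. Let $E=\mathcal{O}(1)\oplus\mathcal{O}(n-1)$ over $\mathbb{CP}^1$ and let $F_i\subset E_{x_i}$ be lines such that (i) $F_i\cap \mathcal{O}(n-1)_{x_i}=0$ for all $i$, and (ii) there is no degree $1$ line subbundle $L\subset E$ with $F_i\subset L_{x_i}$ for all $i$. Then the parabolic bundle $E_*$ with flags $F_i$ and weights $a_{i1}<a_{i2}$ at $x_i$ is stable: for every holomorphic line subbundle $L\subset E$, $$\mathrm{pardeg}\, L_* := \deg L - \sum_{i:\,F_i\subset L_{x_i}} a_{i1} - \sum_{i:\,F_i\not\subset L_{x_i}} a_{i2} < 0 .$$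
   Context: The parabolic structure on $E$ is: at each $x_i$, the line $F_i$ carries the smaller weight $a_{i1}$ and the quotient $E_{x_i}/F_i$ carries the larger weight $a_{i2}$; the parabolic degree of $E_*$ is $\deg E - \sum_i (a_{i1}+a_{i2}) = 0$. The induced parabolic structure on a line subbundle $L$ has weight $a_{i1}$ at $x_i$ if $F_i\subset L_{x_i}$ and $a_{i2}$ otherwise, giving the displayed formula for $\mathrm{pardeg}\,L_*$. *)

From HB Require Import structures.
From mathcomp Require Import all_boot all_order all_algebra.
From mathcomp Require Import reals.
From mathcomp Require Import complex.
Set Implicit Arguments. Unset Strict Implicit. Unset Printing Implicit Defensive.
Import Order.TTheory GRing.Theory Num.Theory.
Local Open Scope ring_scope.

(* A binary form (homogeneous polynomial in two variables (u,v)) of degree k,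
   encoded by the univariate polynomial of its coefficients:
   p = sum_j p_j X^j  represents  sum_{j <= k} p_j u^j v^(k-j). *)
Definition is_form (F : ringType) (k : int) (p : {poly F}) : bool :=
  if (k < 0)%R then p == 0 else (size p <= `|k|.+1)%N.

Definition form_eval (F : ringType) (k : int) (p : {poly F}) (w : F * F) : F :=
  \sum_(j < size p) p`_j * w.1 ^+ j * w.2 ^+ (`|k| - j).

(* E = O(1) (+) O(e) over P^1 (here e = n-1).  A line subbundle L ~ O(d) of E
   is the image of a fibrewise-injective map O(d) -> E, i.e. a pair (p,q) of
   binary forms of degrees 1-d and e-d with no common zero on P^1.  Its fibre
   at the point with representative w is spanned by
   (form_eval (1-d) p w, form_eval (e-d) q w), in the trivialisation of
   E_w ~ C^2 given by evaluating sections of O(1), O(e) at w. *)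
Definition line_subbundle (F : ringType) (e : nat) (d : int) (p q : {poly F}) :=
  [/\ is_form (1 - d) p, is_form (e%:Z - d) q &
      forall w : F * F, w != (0, 0) ->
        form_eval (1 - d) p w != 0 \/ form_eval (e%:Z - d) q w != 0].

(* The flag line spanned by f (f != 0) in E_w lies in the fibre L_w. *)
Definition flag_in (F : ringType) (e : nat) (d : int) (p q : {poly F})
  (w f : F * F) : bool :=
  f.1 * form_eval (e%:Z - d) q w - f.2 * form_eval (1 - d) p w == 0.

Definition pardeg (F : ringType) (R : numDomainType) (n : nat) (d : int)
  (p q : {poly F}) (x f : 'I_n -> F * F) (a1 a2 : 'I_n -> R) : R :=
  d%:~R - \sum_(i < n | flag_in n.-1 d p q (x i) (f i)) a1 i
        - \sum_(i < n | ~~ flag_in n.-1 d p q (x i) (f i)) a2 i.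

From HB Require Import structures.
From mathcomp Require Import all_boot all_order all_algebra.
From mathcomp Require Import reals.
From mathcomp Require Import complex.
From mathcomp Require Import zify lra.
Set Implicit Arguments. Unset Strict Implicit.
Import Order.TTheory GRing.Theory Num.Theory.
Local Open Scope ring_scope.

(* All weights are positive, so d <= 0 is harmless.
   For d = 1, condition (ii) puts some flag F_j outside L, raising its weight
   to a_j2, and 1 - alpha_j < sum_(i != j) (1 - alpha_i) is exactly the needed
   inequality.  For d >= 2 the O(1)-component of O(d) -> E vanishes, so L lies
   in O(n-1) (hence d <= n-1) and by (i) contains no flag; then
   pardeg L = d - n + sum_i (1 - alpha_i)/2 < d - n + 1 <= 0. *)

Section ParabolicDegree.

Variables (F : nzRingType) (R : numDomainType) (n : nat) (d : int).
Variables (p q : {poly F}) (x f : 'I_n -> F * F) (a1 a2 : 'I_n -> R).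

Lemma pardegE : pardeg d p q x f a1 a2 = d%:~R - \sum_(i < n)
  (if flag_in n.-1 d p q (x i) (f i) then a1 i else a2 i).
Proof.
rewrite /pardeg [in RHS](bigID (fun i => flag_in n.-1 d p q (x i) (f i))) /=.
rewrite opprD addrA; congr (_ - _ - _); apply: eq_bigr => i; first by move->.
by move/negbTE->.
Qed.

Lemma pardeg_unflagged : (forall i, ~~ flag_in n.-1 d p q (x i) (f i)) ->
  pardeg d p q x f a1 a2 = d%:~R - \sum_(i < n) a2 i.
Proof.
by move=> unfl; rewrite pardegE; congr (_ - _); apply: eq_bigr => i _;
  rewrite (negbTE (unfl i)).
Qed.

Hypothesis le_a1_a2 : forall i, a1 i <= a2 i.

Lemma pardeg_le : pardeg d p q x f a1 a2 <= d%:~R - \sum_(i < n) a1 i.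
Proof.
rewrite pardegE lerD2l lerN2; apply: ler_sum => i _.
by case: ifP.
Qed.

Lemma pardeg_le_unflagged j : ~~ flag_in n.-1 d p q (x j) (f j) ->
  pardeg d p q x f a1 a2 <= d%:~R - (a2 j + \sum_(i < n | i != j) a1 i).
Proof.
move=> unfl_j; rewrite pardegE (bigD1 j) //= (negbTE unfl_j).
by rewrite lerD2l lerN2 lerD2l; apply: ler_sum => i _; case: ifP.
Qed.

End ParabolicDegree.

Lemma form_eval0 (F : nzRingType) k (w : F * F) : form_eval k 0 w = 0.
Proof. by rewrite /form_eval size_poly0 big_ord0. Qed.

Lemma is_form_neg (F : nzRingType) k (p : {poly F}) : k < 0 -> is_form k p -> p = 0.
Proof. by rewrite /is_form => ->; move/eqP. Qed.

Section LineSubbundle.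

Variables (F : nzRingType) (e : nat) (d : int) (p q : {poly F}).
Hypothesis Lpq : line_subbundle e d p q.

Lemma line_subbundle_first0 : 1 < d -> p = 0.
Proof. by case: Lpq => form_p _ _ lt1d; apply: is_form_neg form_p; lia. Qed.

Lemma line_subbundle_deg_le : 1 < d -> d <= e%:Z.
Proof.
case: Lpq => form_p form_q nondeg lt1d; case: (lerP d e%:Z) => //= ltde.
have p0 : p = 0 by apply: is_form_neg form_p; lia.
have q0 : q = 0 by apply: is_form_neg form_q; lia.
have := nondeg (1, 0); rewrite p0 q0 !form_eval0 eqxx.
by rewrite xpair_eqE oner_eq0 /= => /(_ isT) [].
Qed.

End LineSubbundle.

(* [p = 0] means that L lies in O(e). *)
Lemma flag_in_first0 (F : idomainType) e d (q : {poly F}) (w f : F * F) :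
  line_subbundle e d 0 q -> w != (0, 0) -> f.1 != 0 -> ~~ flag_in e d 0 q w f.
Proof.
case=> _ _ nondeg w_nz f1_nz.
rewrite /flag_in form_eval0 mulr0 subr0 mulf_eq0 negb_or f1_nz /=.
by case: (nondeg w w_nz); rewrite ?form_eval0 ?eqxx.
Qed.

Section Weights.

Variables (F : nzRingType) (R : realFieldType) (n : nat).
Variables (x f : 'I_n -> F * F) (alpha : 'I_n -> R).
Hypothesis alpha01 : forall i, 0 < alpha i < 1.

Let a1 i := (1 - alpha i) / 2.
Let a2 i := (1 + alpha i) / 2.

Let le_a1_a2 i : a1 i <= a2 i.
Proof. by rewrite /a1 /a2; have /andP[] := alpha01 i; lra. Qed.

Lemma pardeg_lt0_nonpos d (p q : {poly F}) :
  (0 < n)%N -> d <= 0 -> pardeg d p q x f a1 a2 < 0.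
Proof.
move=> n_gt0 d_le0; apply: le_lt_trans (pardeg_le d p q x f le_a1_a2) _.
pose i0 := Ordinal n_gt0; rewrite (bigD1 i0) //= -mulr_suml /a1.
have /andP[_ a_lt1] := alpha01 i0.
have : 0 <= \sum_(i < n | i != i0) (1 - alpha i).
  by apply: sumr_ge0 => i _; have /andP[_] := alpha01 i; lra.
by move: d_le0; rewrite -(ler_int R); lra.
Qed.

Lemma pardeg_lt0_deg1 (p q : {poly F}) j :
  1 - alpha j < \sum_(i < n | i != j) (1 - alpha i) ->
  ~~ flag_in n.-1 1 p q (x j) (f j) -> pardeg 1 p q x f a1 a2 < 0.
Proof.
move=> sum_gt unfl_j; apply: le_lt_trans (pardeg_le_unflagged le_a1_a2 unfl_j) _.
by rewrite -mulr_suml /a2; lra.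
Qed.

Lemma pardeg_lt0_unflagged d (p q : {poly F}) :
  \sum_(i < n) (1 - alpha i) < 2 -> d + 1 <= n%:Z ->
  (forall i, ~~ flag_in n.-1 d p q (x i) (f i)) -> pardeg d p q x f a1 a2 < 0.
Proof.
move=> sum_lt2 d_lt_n unfl; rewrite pardeg_unflagged //.
have sum_a2_a1 : \sum_(i < n) a2 i + \sum_(i < n) a1 i = n%:R.
  rewrite -big_split -[n in RHS]card_ord -sumr_const /=.
  by apply: eq_bigr => i _; rewrite /a1 /a2; lra.
move: d_lt_n sum_a2_a1; rewrite -(ler_int R) intrD -pmulrn -!mulr_suml.
lra.
Qed.

End Weights.

Theorem mainTheorem3 (R : realType) (n : nat) (x f : 'I_n -> R[i] * R[i])
    (alpha : 'I_n -> R) :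
  (3 <= n)%N ->
  (* the x_i are points of CP^1 (nonzero representatives), pairwise distinct *)
  (forall i, x i != (0, 0)) ->
  (forall i j, i != j -> (x i).1 * (x j).2 - (x i).2 * (x j).1 != 0) ->
  (forall i, 0 < alpha i < 1) ->
  \sum_(i < n) (1 - alpha i) < 2 ->
  (forall j, 1 - alpha j < \sum_(i < n | i != j) (1 - alpha i)) ->
  (* F_i is a line in E_{x_i} *)
  (forall i, f i != (0, 0)) ->
  (* (i) F_i does not meet O(n-1)_{x_i} *)
  (forall i, (f i).1 != 0) ->
  (* (ii) no degree 1 line subbundle contains all the flags *)
  ~ (exists p q : {poly R[i]}, line_subbundle n.-1 1 p q /\
       forall i, flag_in n.-1 1 p q (x i) (f i)) ->
  (* stability *)
  forall (d : int) (p q : {poly R[i]}), line_subbundle n.-1 d p q ->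
    pardeg d p q x f (fun i => (1 - alpha i) / 2) (fun i => (1 + alpha i) / 2) < 0.
Proof.
move=> n3 x_nz _ alpha01 sum_lt2 sum_gt _ f1_nz noL d p q Lpq.
have [d_le0 | d_gt0] := lerP d 0; first by apply: pardeg_lt0_nonpos => //; lia.
have [d1 | d_neq1] := eqVneq d 1.
  subst d; have [j unfl_j] : exists j, ~~ flag_in n.-1 1 p q (x j) (f j).
    apply/existsP; rewrite -negb_forall; apply/negP => /forallP all_in.
    by apply: noL; exists p, q.
  exact: pardeg_lt0_deg1 (sum_gt j) unfl_j.
have d_gt1 : 1 < d by lia.
have d_le := line_subbundle_deg_le Lpq d_gt1.
have p0 := line_subbundle_first0 Lpq d_gt1; rewrite {}p0 in Lpq *.
apply: pardeg_lt0_unflagged => //; first by lia.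
by move=> i; apply: flag_in_first0.
Qed.
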